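(* Let $\Pi$ be a clingcon program with CSP $(V,D,C)$, let $\mathbf{p}$ be the set of all propositional constants occurring in $\Pi$, and let $I=\langle I^f,X\rangle$ be an interpretation of the signature $V\cup\mathbf{p}$. Then $X$ is a constraint answer set of $\Pi$ relative to $I^f$ if and only if $I\models_{bg}\mathrm{SM}[\Pi;\mathbf{p}]$, where $\Pi$ is identified with the conjunction of the formulas $B\land N\land \mathit{Cn}\rightarrow a$ over all its rules.
   Context: Formulas are (possibly many-sorted) first-order formulas built from $\bot,\land,\lor,\rightarrow,\forall,\exists$; $\neg F$ abbreviates $F\rightarrow\bot$, $\top$ abbreviates $\neg\bot$. Stable model operator. For predicate symbols $u,c$ of the same arity, $u\le c$ denotes $\forall\mathbf{x}(u(\mathbf{x})\rightarrow c(\mathbf{x}))$; $u=c$ denotes $\forall\mathbf{x}(u(\mathbf{x})\leftrightarrow c(\mathbf{x}))$ if $u,c$ are predicate symbols and $\forall\mathbf{x}(u(\mathbf{x})=c(\mathbf{x}))$ if they are function symbols; for lists these are conjunctions of the componentwise expressions. Let $\mathbf{c}$ be a list of distinct predicate and function constants and $\widehat{\mathbf{c}}$ a list of distinct predicate and function variables corresponding to $\mathbf{c}$. Write $\mathbf{c}^{pred}$, $\widehat{\mathbf{c}}^{pred}$ for the sublists of predicate symbols. $\widehat{\mathbf{c}}<\mathbf{c}$ abbreviates $(\widehat{\mathbf{c}}^{pred}\le\mathbf{c}^{pred})\land\neg(\widehat{\mathbf{c}}=\mathbf{c})$. For a formula $F$, $F^*(\widehat{\mathbf{c}})$ is defined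 recursively: if $F$ is atomic (including $\bot$), $F^*=F'\land F$ where $F'$ is obtained from $F$ by replacing every intensional constant from $\mathbf{c}$ by the corresponding variable from $\widehat{\mathbf{c}}$; $(G\land H)^*=G^*\land H^*$; $(G\lor H)^*=G^*\lor H^*$; $(G\rightarrow H)^*=(G^*\rightarrow H^* )\land(G\rightarrow H)$; $(\forall xG)^*=\forall xG^*$; $(\exists xG)^*=\exists xG^*$. Then $\mathrm{SM}[F;\mathbf{c}]$ is the second-order formula $F\land\neg\exists\widehat{\mathbf{c}}(\widehat{\mathbf{c}}<\mathbf{c}\land F^*(\widehat{\mathbf{c}}))$. Background theory. Let $\sigma^{bg}$ be the (many-sorted) signature of a background theory $bg$; an interpretation of $\sigma^{bg}$ satisfying $bg$ is a background interpretation. For a signature $\sigma$ disjoint from $\sigma^{bg}$, an interpretation $I$ of $\sigma$ satisfies a (possibly second-order) sentence $F$ w.r.t. $bg$, written $I\models_{bg}F$, if there is a background interpretation $J$ of $\sigma^{bg}$ with the same universe as $I$ such that $I\cup J\models F$. Clingcon programs. A CSP is a tuple $(V,D,C)$ of constraint variables $V$, their domains $D$, and constraints $C$. Constraint variables are identified with object constants whose value sorts are the corresponding domains; $\sigma^{bg}$ is disjoint from $V$, contains all domain values as object constants and the symbols (such as $+,\times,\ge$) used in constraints; each constraint is a sentence $F(v_1,\dots,v_n)$ of signature $V\cup\sigma^{bg}$ obtained from a formula $F(x_1,\dots,x_n)$ of $\sigma^{bg}$ by substituting constants $v_i\in V$ for the variables $x_i$. A clingcon program $\Pi$ with CSP $(V,D,C)$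 is a set of rules $a\leftarrow B,N,\mathit{Cn}$ where $a$ is a propositional atom or $\bot$, $B$ is a set of propositional atoms, $N$ is a set of negative propositional literals $\mathit{not}\ c$, and $\mathit{Cn}$ is a set of constraints from $C$, each possibly preceded by $\mathit{not}$; as a formula, commas are conjunctions and $\mathit{not}$ is $\neg$. For a signature of object constants and propositional constants, an interpretation $I$ is identified with $\langle I^f,X\rangle$, where $I^f$ is the restriction of $I$ to the object constants and $X$ is the set of propositional constants true in $I$. The constraint reduct $\Pi^X_{I^f}$ is the set of rules $a\leftarrow B$ for each rule $a\leftarrow B,N,\mathit{Cn}$ of $\Pi$ such that $I^f\models_{bg}\mathit{Cn}$ (every constraint in $\mathit{Cn}$ not preceded by $\mathit{not}$ holds and every one preceded by $\mathit{not}$ fails) and $X\models N$. $X$ is a constraint answer set of $\Pi$ relative to $I^f$ if $X$ is a minimal model of $\Pi^X_{I^f}$ (rules with head $\bot$ act as constraints).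
   Formalization: Some background interpretation has the same universe as I, and all background interpretations with that universe agree on the truth of every constraint in C. The statement above fails without it. *)

From Stdlib Require List.
From mathcomp Require Import all_boot.
Set Implicit Arguments.
Unset Strict Implicit.
Unset Printing Implicit Defensive.

(* Syntax.  A : propositional constants, C : constraints of the CSP.   *)
(* FVar a is the propositional (0-ary predicate) variable \hat a       *)
(* corresponding to the constant a.  Constraints are sentences of      *)
(* V \cup sigma^bg; they contain no propositional constants, and are   *)
(* treated as (opaque) subformulas whose truth is given semantically   *)
(* by I^f \cup J.                                                     *)
Section Syntax.
Variables (A C : eqType).

Inductive form :=
  | FBot
  | FAtom of A
  | FVar of A
  | FCst of C
  | FAnd of form & form
  | FOr of form & form
  | FImp of form & form.

Definition FNeg (F : form) := FImp F FBot.
Definition FTop := FNeg FBot.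
Definition FConj (l : seq form) := foldr FAnd FTop l.

(* F^*(\hat p) for the list p of intensional (propositional) constants. *)
Fixpoint star (p : seq A) (F : form) : form :=
  match F with
  | FBot => FAnd FBot FBot
  | FAtom a => FAnd (if a \in p then FVar a else FAtom a) (FAtom a)
  | FVar a => FAnd (FVar a) (FVar a)
  | FCst c => FAnd (FCst c) (FCst c)   (* F' = F: no intensional constant *)
  | FAnd G H => FAnd (star p G) (star p H)
  | FOr G H => FOr (star p G) (star p H)
  | FImp G H => FAnd (FImp (star p G) (star p H)) (FImp G H)
  end.

(* Truth in an interpretation: X = true propositional constants,
   Y = values of the predicate variables \hat a, sc = truth of constraints
   in I^f \cup J. *)
Fixpoint eval (X Y : A -> Prop) (sc : C -> Prop) (F : form) : Prop :=
  match F with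
  | FBot => False
  | FAtom a => X a
  | FVar a => Y a
  | FCst c => sc c
  | FAnd G H => eval X Y sc G /\ eval X Y sc H
  | FOr G H => eval X Y sc G \/ eval X Y sc H
  | FImp G H => eval X Y sc G -> eval X Y sc H
  end.

(* SM[F; p] evaluated in I \cup J (second-order quantifier over \hat p). *)
Definition SM_holds (p : seq A) (F : form) (X : A -> Prop) (sc : C -> Prop) : Prop :=
  eval X X sc F /\
  ~ (exists Y : A -> Prop,
        ((forall a, a \in p -> Y a -> X a) /\ ~ (forall a, a \in p -> (Y a <-> X a)))
        /\ eval X Y sc (star p F)).

(* Clingcon rules  a <- B, N, Cn   (head None = bot;
   Cn = constraints cpos and  not c  for c in cneg). *)
Record rule := Rule {
  head : option A;
  pos  : seq A;
  neg  : seq A;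
  cpos : seq C;
  cneg : seq C }.

Definition program := seq rule.

Definition head_form (h : option A) : form :=
  if h is Some a then FAtom a else FBot.

Definition rule_form (r : rule) : form :=
  FImp (FConj (map FAtom (pos r) ++ map (fun a => FNeg (FAtom a)) (neg r)
               ++ map FCst (cpos r) ++ map (fun c => FNeg (FCst c)) (cneg r)))
       (head_form (head r)).

Definition prog_form (P : program) : form := FConj (map rule_form P).

Definition rule_atoms (r : rule) : seq A :=
  (if head r is Some a then [:: a] else [::]) ++ pos r ++ neg r.
Definition prog_atoms (P : program) : seq A := flatten (map rule_atoms P).

End Syntax.

(*  Fi : interpretations I^f of the constraint variables V (each with  *)
(*       its universe), Bg : interpretations J of sigma^bg,            *)
(*  bg_int J   : J satisfies bg (J is a background interpretation),    *)
(*  same_univ If J : J has the same universe as If,                    *)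
(*  satc If J c : If \cup J |= c.                                      *)
Section Background.
Variables (A C : eqType) (Fi Bg : Type)
  (bg_int : Bg -> Prop) (same_univ : Fi -> Bg -> Prop)
  (satc : Fi -> Bg -> C -> Prop).

Definition background_for (If : Fi) (J : Bg) : Prop := bg_int J /\ same_univ If J.

(* If (together with X) satisfies w.r.t. bg the sentence whose truth in
   I \cup J is  Phi (satc If J). *)
Definition sat_bg (If : Fi) (Phi : (C -> Prop) -> Prop) : Prop :=
  exists J, background_for If J /\ Phi (satc If J).

Definition cn_holds (If : Fi) (r : rule A C) : Prop :=
  sat_bg If (fun sc => (forall c, c \in cpos r -> sc c) /\
                       (forall c, c \in cneg r -> ~ sc c)).

(* the constraint reduct Pi^X_{I^f}, as a set of rules (head, body) *)
Definition reduct (P : program A C) (If : Fi) (X : A -> Prop)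
    (hb : option A * seq A) : Prop :=
  exists r, List.In r P /\ cn_holds If r /\ (forall a, a \in neg r -> ~ X a)
            /\ hb = (head r, pos r).

Definition is_model (Y : A -> Prop) (R : option A * seq A -> Prop) : Prop :=
  forall h B, R (h, B) -> (forall b, b \in B -> Y b) ->
    match h with Some a => Y a | None => False end.

Definition minimal_model (X : A -> Prop) (R : option A * seq A -> Prop) : Prop :=
  is_model X R /\
  forall Y : A -> Prop, (forall a, Y a -> X a) -> is_model Y R ->
    forall a, X a -> Y a.

Definition constraint_answer_set (P : program A C) (If : Fi) (X : A -> Prop) : Prop :=
  minimal_model X (reduct P If X).

End Background.

(* Once the constraints are valued by the (essentially unique) background
   interpretation, F^*(Y) for the program formula F says that F holds and that
   Y /\ X satisfies every rule of the reduct Pi^X: positive atoms of p become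
   Y /\ X, while negative literals and constraints keep their truth value in X,
   because (~ G)^* is equivalent to ~ G.  Thus a Y < X on p with F^*(Y) is the
   same thing as a proper submodel of the reduct, and the stable model
   condition becomes the minimality of X. *)
From Pilot Require Import Defs.
From mathcomp Require Import all_boot.
From Stdlib Require Import Classical.
Set Implicit Arguments.
Unset Strict Implicit.
Unset Printing Implicit Defensive.

Lemma Forall_memE (T : eqType) (Q R : T -> Prop) (s : seq T) :
  (forall x, x \in s -> Q x <-> R x) ->
  List.Forall Q s <-> forall x, x \in s -> R x.
Proof.
elim: s => [|y s IH] QR; first by split=> // _; constructor.
rewrite List.Forall_cons_iff IH => [|x xs]; last by apply: QR; rewrite inE xs orbT.
rewrite QR ?mem_head //; split=> [[Ry Rs] x|Rys].
- by rewrite inE => /predU1P [->|/Rs].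
- by split=> [|x xs]; apply: Rys; rewrite inE ?eqxx ?xs ?orbT.
Qed.

Lemma Forall_mem (T : eqType) (Q : T -> Prop) (s : seq T) :
  List.Forall Q s <-> forall x, x \in s -> Q x.
Proof. exact: Forall_memE. Qed.

Section Formulas.
Variables (A C : eqType).
Implicit Types (X Y : A -> Prop) (sc : C -> Prop) (p : seq A) (F : form A C).

Lemma eval_ext X Y sc1 sc2 F :
  (forall c, sc1 c <-> sc2 c) -> eval X Y sc1 F <-> eval X Y sc2 F.
Proof.
by move=> sc12; elim: F => [||||G IG H IH|G IG H IH|G IG H IH] //=; rewrite ?IG ?IH.
Qed.

Lemma eval_starW X Y sc p F : eval X Y sc (star p F) -> eval X Y sc F.
Proof.
elim: F => [|a|a|c|G IG H IH|G IG H IH|G IG H IH] /=;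
  by [case | case=> /IG ? /IH ? | case=> [/IG|/IH]; auto | case].
Qed.

Lemma eval_star_neg X Y sc p F :
  eval X Y sc (star p (FNeg F)) <-> ~ eval X Y sc F.
Proof. by split=> [[]|nF] //; split=> // /eval_starW. Qed.

Lemma eval_star_atom X Y sc p a :
  a \in p -> eval X Y sc (star p (FAtom C a)) <-> Y a /\ X a.
Proof. by move=> /= ->. Qed.

Lemma eval_FConj X Y sc (l : seq (form A C)) :
  eval X Y sc (FConj l) <-> List.Forall (eval X Y sc) l.
Proof.
elim: l => [|F l IH] /=; first by split=> // _; constructor.
by rewrite List.Forall_cons_iff IH.
Qed.

Lemma eval_star_FConj X Y sc p (l : seq (form A C)) :
  eval X Y sc (star p (FConj l)) <-> List.Forall (fun F => eval X Y sc (star p F)) l.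
Proof.
elim: l => [|F l IH] /=; first by split=> // _; constructor.
by rewrite List.Forall_cons_iff IH.
Qed.

End Formulas.

Section Rules.
Variables (A C : eqType).
Implicit Types (X Y Z : A -> Prop) (sc : C -> Prop) (p : seq A)
  (r : rule A C) (P : program A C).

Definition body_form r : form A C :=
  FConj (map (@FAtom A C) (pos r) ++ map (fun a => FNeg (FAtom C a)) (neg r)
         ++ map (@FCst A C) (cpos r) ++ map (fun c => FNeg (FCst A c)) (cneg r)).

Definition constraints_hold r sc : Prop :=
  (forall c, c \in cpos r -> sc c) /\ (forall c, c \in cneg r -> ~ sc c).

Definition body_holds Z X sc r : Prop :=
  (forall a, a \in pos r -> Z a) /\ (forall a, a \in neg r -> ~ X a) /\
  constraints_hold r sc.

Definition head_holds Z (h : option A) : Prop :=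
  if h is Some a then Z a else False.

Definition reduct_holds sc P X Z : Prop :=
  forall r, List.In r P -> body_holds Z X sc r -> head_holds Z (Defs.head r).

Lemma eval_body X Y sc r : eval X Y sc (body_form r) <-> body_holds X X sc r.
Proof. by rewrite eval_FConj !List.Forall_app !List.Forall_map !Forall_mem. Qed.

Lemma eval_star_body X Y sc p r :
  {subset pos r <= p} ->
  eval X Y sc (star p (body_form r)) <-> body_holds (fun a => Y a /\ X a) X sc r.
Proof.
move=> pos_p.
rewrite eval_star_FConj !List.Forall_app !List.Forall_map.
rewrite (Forall_memE (R := fun a => Y a /\ X a)); last first.
  by move=> a /pos_p; apply: eval_star_atom.
rewrite (Forall_memE (R := fun a => ~ X a)); last by move=> a _; apply: eval_star_neg.
rewrite (Forall_memE (R := sc)); last by move=> c _ /=; tauto.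
by rewrite (Forall_memE (R := fun c => ~ sc c)); last by move=> c _; apply: eval_star_neg.
Qed.

Lemma eval_rule X Y sc r :
  eval X Y sc (rule_form r) <-> (body_holds X X sc r -> head_holds X (Defs.head r)).
Proof. by rewrite /rule_form /= -/(body_form r) eval_body; case: (Defs.head r). Qed.

Lemma eval_star_rule X Y sc p r :
  {subset rule_atoms r <= p} ->
  eval X Y sc (star p (rule_form r)) <->
  (body_holds (fun a => Y a /\ X a) X sc r ->
     head_holds (fun a => Y a /\ X a) (Defs.head r)) /\ eval X Y sc (rule_form r).
Proof.
rewrite /rule_atoms => atoms_p.
have pos_p : {subset pos r <= p}.
  by move=> a a_pos; apply: atoms_p; rewrite !mem_cat a_pos orbT.
rewrite -[eval _ _ _ (star _ _)]/((eval X Y sc (star p (body_form r)) ->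
  eval X Y sc (star p (head_form C (Defs.head r)))) /\ eval X Y sc (rule_form r)).
rewrite eval_star_body //.
move: atoms_p; case: (Defs.head r) => [a|] /= atoms_p.
- by rewrite atoms_p ?mem_head //=; tauto.
- tauto.
Qed.

Lemma rule_atoms_prog P r : List.In r P -> {subset rule_atoms r <= prog_atoms P}.
Proof.
rewrite /prog_atoms; elim: P => [|r' P IH] //= [<-|rP] a a_r; rewrite mem_cat.
- by rewrite a_r.
- by rewrite IH ?orbT.
Qed.

Lemma eval_prog X Y sc P : eval X Y sc (prog_form P) <-> reduct_holds sc P X X.
Proof.
rewrite eval_FConj List.Forall_map List.Forall_forall.
by split=> HP r /HP /eval_rule.
Qed.

Lemma eval_star_prog X Y sc P :
  eval X Y sc (star (prog_atoms P) (prog_form P)) <->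
  reduct_holds sc P X (fun a => Y a /\ X a) /\ reduct_holds sc P X X.
Proof.
rewrite -(eval_prog X Y) eval_FConj eval_star_FConj !List.Forall_map !List.Forall_forall.
split=> [HP | [HPY HP] r rP].
- by split=> r rP; have /(eval_star_rule _ _ _ (rule_atoms_prog rP)) [] := HP r rP.
- by apply/(eval_star_rule _ _ _ (rule_atoms_prog rP)); split; [apply: HPY | apply: HP].
Qed.

End Rules.

Section StableModels.
Variables (A C : eqType).
Implicit Types (X Y Z : A -> Prop) (sc : C -> Prop) (P : program A C)
  (R : option A * seq A -> Prop).

Lemma is_model_ext Z1 Z2 R :
  (forall a, Z1 a <-> Z2 a) -> is_model Z1 R -> is_model Z2 R.
Proof.
move=> Z12 M1 [a|] B RB B2 /=; last by apply: M1 RB _ => b /B2 /Z12.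
by apply/Z12; apply: M1 RB _ => b /B2 /Z12.
Qed.

Lemma SM_holds_ext p F X sc1 sc2 :
  (forall c, sc1 c <-> sc2 c) ->
  SM_holds p F X sc1 -> SM_holds p F X sc2.
Proof.
move=> sc12 [F1 noY]; split; first exact/(eval_ext _ _ _ sc12).
by move=> [Y [YX FY]]; apply: noY; exists Y; split; last exact/(eval_ext _ _ _ sc12).
Qed.

Lemma minimal_model_SM sc P X R :
  (forall Z, is_model Z R <-> reduct_holds sc P X Z) ->
  (forall a, X a -> a \in prog_atoms P) ->
  minimal_model X R <-> SM_holds (prog_atoms P) (prog_form P) X sc.
Proof.
move=> modelE X_atoms; rewrite /minimal_model /SM_holds eval_prog -modelE.
split=> [[MX Xmin] | [MX noY]]; split=> //.
- move=> [Y [[YX not_XY] /eval_star_prog [/modelE MYX _]]]; apply: not_XY => a a_p.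
  have XYX := Xmin _ (fun b => @proj2 _ _) MYX.
  by split=> [/(YX a a_p) | /XYX []].
- move=> Y YX MY a Xa; apply: NNPP => nYa; apply: noY.
  exists Y; split; first split=> [b _ /YX // | YX'].
    exact/nYa/(YX' a (X_atoms a Xa)).
  apply/eval_star_prog; split; last exact/modelE.
  by apply/modelE; apply: is_model_ext MY => b; split=> [Yb|[]//]; split; auto.
Qed.

End StableModels.

Section FixedBackground.
Variables (A C : eqType) (Fi Bg : Type) (bg_int : Bg -> Prop)
  (same_univ : Fi -> Bg -> Prop) (satc : Fi -> Bg -> C -> Prop)
  (If : Fi) (J0 : Bg).
Hypothesis bg_J0 : background_for bg_int same_univ If J0.
Hypothesis bg_unique : forall J1 J2, background_for bg_int same_univ If J1 ->
  background_for bg_int same_univ If J2 -> forall c, satc If J1 c <-> satc If J2 c.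

Lemma sat_bg_at (Phi : (C -> Prop) -> Prop) :
  (forall sc1 sc2, (forall c, sc1 c <-> sc2 c) -> Phi sc1 -> Phi sc2) ->
  sat_bg bg_int same_univ satc If Phi <-> Phi (satc If J0).
Proof.
move=> Phi_ext; split=> [[J [bg_J PhiJ]] | Phi0]; last by exists J0.
by apply: Phi_ext PhiJ; apply: bg_unique.
Qed.

Lemma is_model_reduct (P : program A C) (X Z : A -> Prop) :
  is_model Z (reduct bg_int same_univ satc P If X) <-> reduct_holds (satc If J0) P X Z.
Proof.
have cnE r : cn_holds bg_int same_univ satc If r <-> constraints_hold r (satc If J0).
  apply: sat_bg_at => sc1 sc2 sc12 [pos1 neg1].
  by split=> c cr; [apply/sc12/pos1 | move/sc12; apply: neg1].
split=> [MZ r rP [posZ [negX /cnE cnr]] | RZ h B [r [rP [/cnE cnr [negX [-> ->]]]]] posZ].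
- by apply: MZ posZ; exists r.
- exact: RZ rP _.
Qed.

End FixedBackground.

Theorem theorem3
  (A C : eqType) (Fi Bg : Type)
  (bg_int : Bg -> Prop) (same_univ : Fi -> Bg -> Prop)
  (satc : Fi -> Bg -> C -> Prop)
  (P : program A C) (If : Fi) (X : A -> Prop)
  (* I = <If, X> interprets V \cup p, so X is a set of constants of p *)
  (HX : forall a, X a -> a \in prog_atoms P)
  (* standing reading: the universe of I admits a background interpretation,
     and the background interpretation is fixed (all of them agree on constraints) *)
  (Hex : exists J, background_for bg_int same_univ If J)
  (Hdet : forall J1 J2, background_for bg_int same_univ If J1 ->
            background_for bg_int same_univ If J2 ->
            forall c, satc If J1 c <-> satc If J2 c) :
  constraint_answer_set bg_int same_univ satc P If X <->
  sat_bg bg_int same_univ satc If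
    (fun sc => SM_holds (prog_atoms P) (prog_form P) X sc).
Proof.
have [J0 bg_J0] := Hex.
rewrite (sat_bg_at bg_J0 Hdet (SM_holds_ext (X := X))).
apply: minimal_model_SM HX => Z.
exact: is_model_reduct bg_J0 Hdet P X Z.
Qed.
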